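(* Let $p$ be an odd prime and $N=C_{2p^2}$. The regular subgroups of $\mathrm{Hol}(N)$ are exactly $p$ subgroups isomorphic to $C_{2p^2}$ (namely $\langle (x,\varphi)\rangle$ with $x$ a generator of $N$ and $\varphi^p=\mathrm{Id}$) and one subgroup isomorphic to $D_{2p^2}$ (namely $\langle (a^2,\mathrm{Id}),(a,\chi)\rangle$ for $a$ a generator of $N$ and $\chi$ the automorphism $x\mapsto x^{-1}$).
   Context: $\mathrm{Hol}(N)=N\rtimes\mathrm{Aut}(N)$, with elements $(x,\varphi)$, product $(x,\varphi)(y,\psi)=(x\varphi(y),\varphi\psi)$, acting on $N$ by $(x,\varphi)\cdot n=x\varphi(n)$. A subgroup is regular if this action is transitive with trivial stabilizers. $D_{2p^2}$ is the dihedral group of order $2p^2$. *)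

From HB Require Import structures.
From mathcomp Require Import all_boot all_order all_algebra all_fingroup all_solvable.
Set Implicit Arguments. Unset Strict Implicit. Unset Printing Implicit Defensive.
Local Open Scope group_scope.

(* N is the whole group [set: gT] (a cyclic group of order 2p^2 in the theorem).
   The holomorph Hol(N) = N ⋊ Aut(N) is represented faithfully through its
   defining action on N: the element (x, phi) is the permutation n |-> x * phi n. *)
Section Hol.
Variable gT : finGroupType.

Lemma hol_fun_inj (x : gT) (phi : {perm gT}) : injective (fun n => x * phi n).
Proof. by move=> a b /= /(mulgI x) /perm_inj. Qed.

Definition hol_elt (x : gT) (phi : {perm gT}) : {perm gT} := perm (@hol_fun_inj x phi).

Definition Hol : {set {perm gT}} :=
  [set hol_elt x phi | x in [set: gT], phi in Aut [set: gT]].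

Definition inv_perm : {perm gT} := perm (@invg_inj gT).

Definition regular (H : {set {perm gT}}) : Prop :=
  [transitive H, on [set: gT] | 'P] /\ forall n : gT, 'C_H[n | 'P] = 1.

Definition cyc_regs (p : nat) : {set {group {perm gT}}} :=
  [set H : {group {perm gT}} | [exists x : gT, exists phi : {perm gT},
     [&& generator [set: gT] x, phi \in Aut [set: gT], phi ^+ p == 1
       & H :==: <[hol_elt x phi]>]]].

Definition dih_regs : {set {group {perm gT}}} :=
  [set H : {group {perm gT}} | [exists a : gT,
     generator [set: gT] a &&
     (H :==: <<[set hol_elt (a ^+ 2) 1; hol_elt a inv_perm]>>)]].
End Hol.

(* Every automorphism of N = <g> is a power map.  If H is regular, |H| = 2p^2 and
   |Aut N| = (p - 1)p force the automorphism part of each (x, phi) in H to satisfy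
   phi^(2p) = 1, so phi = psi or phi = psi chi with psi^p = 1, where chi is inversion.
   Such a psi is a shear: psi x = x y with psi y = y and y^p = 1.  Hence
   (x, psi)^p = (x^p, 1), so (x, psi) has order 2p^2 when x generates N, and
   <(x, psi)> is regular; whereas (x, psi chi)^2 = (y^-1, psi^2) fixes x^((p+1)/2), so
   regularity forces psi = 1.  Thus H contains (g, psi) and is cyclic, or contains
   (g, chi); then the element of H mapping 1 to g^2 can only be (g^2, 1), and H is
   dihedral.  The psi with psi^p = 1 form the Sylow p-subgroup of the abelian group
   Aut N, of order p, which counts the cyclic regular subgroups. *)

From HB Require Import structures.
From mathcomp Require Import all_boot all_order all_algebra all_fingroup all_solvable.
From mathcomp Require Import zify.
Set Implicit Arguments. Unset Strict Implicit. Unset Printing Implicit Defensive.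

Lemma double_sqr_sub_pred p : 2 * p ^ 2 - 2 * (p.-1 * p) = 2 * p.
Proof. by case: p => // q /=; nia. Qed.

Section Arithmetic.
Variable p : nat.
Hypotheses (p_pr : prime p) (p_odd : odd p).

Lemma prime_odd_gt2 : 2 < p.
Proof. by case: p p_pr p_odd => [|[|[|]]]. Qed.

Lemma coprime2p : coprime 2 p.
Proof. by rewrite prime_coprime // dvdn2 p_odd. Qed.

Lemma expn_prime_eq1_mod k : k ^ p = 1 %[mod 2 * p] -> k = 1 %[mod 2 * p].
Proof.
move/eqP; rewrite !chinese_remainder ?coprime2p // => /andP[/eqP k2 /eqP kp].
apply/eqP; rewrite chinese_remainder ?coprime2p //; apply/andP; split; apply/eqP.
  by move: k2; rewrite !modn2 oddX gtn_eqF ?prime_gt0.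
by rewrite -(fermat_little k p_pr).
Qed.

Lemma dvdn_sqrn_sub1 k : 2 * p ^ 2 %| k ^ 2 - 1 ->
  (2 * p ^ 2 %| k - 1) \/ (2 * p ^ 2 %| k.+1).
Proof.
have [-> | k_gt0] := posnP k; first by left.
rewrite (_ : k ^ 2 - 1 = (k - 1) * k.+1); last by nia.
move=> dvd_n.
have /negP : ~~ odd ((k - 1) * k.+1).
  by rewrite -dvdn2 (dvdn_trans _ dvd_n) // dvdn_mulr.
have two_dvd c : ~~ odd c -> p ^ 2 %| c -> 2 * p ^ 2 %| c.
  by move=> c_even p2c; rewrite Gauss_dvd ?coprimeXr ?coprime2p // dvdn2 c_even.
rewrite oddM oddB // oddS /=; case: (boolP (odd k)) => //= k_odd _.
have [cop | cop] : coprime p (k - 1) \/ coprime p k.+1.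
  rewrite !prime_coprime //; apply/orP; rewrite -negb_and; apply/negP.
  case/andP=> pk1 pk2; have := dvdn_sub pk2 pk1.
  rewrite (_ : k.+1 - (k - 1) = 2); last by lia.
  by move/dvdn_leq => /(_ isT); rewrite leqNgt prime_odd_gt2.
- right; apply: two_dvd; first by rewrite /= k_odd.
  by rewrite -(Gauss_dvdr _ (coprimeXl 2 cop)) (dvdn_trans (dvdn_mull 2 (dvdnn _)) dvd_n).
- left; apply: two_dvd; first by rewrite oddB // k_odd.
  by rewrite -(Gauss_dvdl _ (coprimeXl 2 cop)) (dvdn_trans (dvdn_mull 2 (dvdnn _)) dvd_n).
Qed.

End Arithmetic.

Local Open Scope group_scope.

Lemma expg_odd (T : finGroupType) (x : T) m : odd m -> x ^+ 2 = 1 -> x ^+ m = x.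
Proof. by move=> m_odd x2; rewrite -(expg_mod _ x2) modn2 m_odd expg1. Qed.

Section HolAlgebra.
Variable gT : finGroupType.
Implicit Types (x y z : gT) (phi psi : {perm gT}).
Local Notation AutN := (Aut [set: gT]).

Lemma hol_eltE x phi z : hol_elt x phi z = x * phi z.
Proof. by rewrite permE. Qed.

Lemma autTM phi : phi \in AutN -> {morph phi : y z / y * z}.
Proof. by move/Aut_morphic/morphicP=> phiM y z; apply: phiM; rewrite inE. Qed.

Lemma autT1 phi : phi \in AutN -> phi 1 = 1.
Proof. by move=> Aphi; apply: (mulgI (phi 1)); rewrite mulg1 -autTM ?mulg1. Qed.

Lemma autTX phi z m : phi \in AutN -> phi (z ^+ m) = phi z ^+ m.
Proof. by move=> Aphi; elim: m => [|m IHm]; rewrite ?autT1 // !expgS autTM // IHm. Qed.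

Lemma perm_powerX phi k : (forall z, phi z = z ^+ k) ->
  forall e z, (phi ^+ e) z = z ^+ (k ^ e).
Proof.
move=> phiE; elim=> [|e IHe] z; first by rewrite expg0 perm1 expn0 expg1.
by rewrite expgSr permM IHe phiE -expgM expnSr.
Qed.

Lemma hol_elt1 x phi : phi \in AutN -> hol_elt x phi 1 = x.
Proof. by move=> Aphi; rewrite hol_eltE autT1 ?mulg1. Qed.

Lemma hol_elt11 : hol_elt 1 1 = 1 :> {perm gT}.
Proof. by apply/permP => z; rewrite hol_eltE !perm1 mul1g. Qed.

Lemma hol_elt_inj x y phi psi : phi \in AutN -> psi \in AutN ->
  hol_elt x phi = hol_elt y psi -> x = y /\ phi = psi.
Proof.
move=> Aphi Apsi Exy; have exy : x = y by rewrite -(hol_elt1 x Aphi) Exy hol_elt1.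
split=> //; apply/permP => z; move/permP/(_ z): Exy; rewrite !hol_eltE exy.
exact: mulgI.
Qed.

Lemma hol_elt_eq1 x phi : phi \in AutN ->
  (hol_elt x phi == 1) = (x == 1) && (phi == 1).
Proof.
move=> Aphi; apply/eqP/andP => [E | [/eqP-> /eqP->]]; last exact: hol_elt11.
by have [-> ->] := hol_elt_inj Aphi (group1 _) (etrans E (esym hol_elt11)).
Qed.

Lemma hol_eltM x y phi psi : psi \in AutN ->
  hol_elt x phi * hol_elt y psi = hol_elt (y * psi x) (phi * psi).
Proof. by move=> Apsi; apply/permP => z; rewrite permM !hol_eltE permM autTM // mulgA. Qed.

Lemma hol_eltX x phi m : phi \in AutN ->
  hol_elt x phi ^+ m = hol_elt ((hol_elt x phi ^+ m) 1) (phi ^+ m).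
Proof.
move=> Aphi; suff [y ->] : exists y, hol_elt x phi ^+ m = hol_elt y (phi ^+ m).
  by rewrite hol_elt1 // groupX.
elim: m => [|m [y IHm]]; first by exists 1; rewrite !expg0 hol_elt11.
by exists (x * phi y); rewrite expgSr IHm hol_eltM // expgSr.
Qed.

Lemma hol_transX x m : hol_elt x 1 ^+ m = hol_elt (x ^+ m) 1.
Proof.
elim: m => [|m IHm]; first by rewrite !expg0 hol_elt11.
by rewrite expgSr IHm hol_eltM ?group1 // perm1 mulg1 -expgS.
Qed.

Lemma order_hol_trans x : #[hol_elt x 1] = #[x].
Proof.
have transX_eq1 m : (hol_elt x 1 ^+ m == 1) = (x ^+ m == 1).
  by rewrite hol_transX hol_elt_eq1 ?group1 // eqxx andbT.
apply/eqP; rewrite eqn_dvd !order_dvdn transX_eq1 expg_order -transX_eq1.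
by rewrite expg_order !eqxx.
Qed.

Lemma HolP h : h \in Hol gT -> exists2 phi, phi \in AutN & h = hol_elt (h 1) phi.
Proof. by case/imset2P=> x phi _ Aphi ->; exists phi; rewrite ?hol_elt1. Qed.

Lemma hol_elt_expg_card (H : {group {perm gT}}) x phi : phi \in AutN ->
  hol_elt x phi \in H -> phi ^+ #|H| = 1.
Proof.
move=> Aphi Hh; have /eqP := expg_cardG Hh.
by rewrite hol_eltX // hol_elt_eq1 ?groupX // => /andP[_ /eqP].
Qed.

Lemma hol_eltX1_shear x y phi m : phi \in AutN -> commute x y ->
  phi x = x * y -> phi y = y -> (hol_elt x phi ^+ m) 1 = x ^+ m * y ^+ 'C(m, 2).
Proof.
move=> Aphi cxy phix phiy; elim: m => [|m IHm]; first by rewrite !expg0 perm1 mulg1.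
rewrite expgSr permM IHm hol_eltE autTM // !autTX // phix phiy expgMn //.
by rewrite binS bin1 addnC expgD expgS !mulgA.
Qed.

Section Abelian.
Hypothesis abN : abelian [set: gT].

Lemma commT x y : commute x y.
Proof. by apply: (centsP abN); rewrite inE. Qed.

Lemma inv_perm_Aut : inv_perm gT \in AutN.
Proof.
rewrite inE; apply/andP; split; first by apply/subsetP => z; rewrite inE.
by apply/morphicP => y z _ _; rewrite !permE invMg commT.
Qed.

Lemma inv_perm_invol : inv_perm gT * inv_perm gT = 1.
Proof. by apply/permP => z; rewrite permM !permE invgK. Qed.

Lemma order_hol_inv x : x != 1 -> #[hol_elt x (inv_perm gT)] = 2.
Proof.
move=> nt_x; apply: nt_prime_order => //.
  by rewrite expgS expg1 hol_eltM ?inv_perm_Aut // inv_perm_invol permE mulgV hol_elt11.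
by rewrite hol_elt_eq1 ?inv_perm_Aut // negb_and nt_x.
Qed.

End Abelian.

Section Regular.
Implicit Type H : {group {perm gT}}.

Lemma card_regular H : regular H -> #|H| = #|[set: gT]|.
Proof. by case=> trH stabH; rewrite -(atransP trH 1 (in_setT _)) card_orbit stabH indexg1. Qed.

Lemma regular_fix H h z : regular H -> h \in H -> h z = z -> h = 1.
Proof.
case=> _ /(_ z) stabH Hh hz; have : h \in 'C_H[z | 'P] by rewrite inE Hh; apply/astab1P.
by rewrite stabH => /set1gP.
Qed.

Lemma regular_eq_at H h1 h2 z : regular H -> h1 \in H -> h2 \in H ->
  h1 z = h2 z -> h1 = h2.
Proof.
move=> regH Hh1 Hh2 E; apply/eqP; rewrite eq_mulgV1; apply/eqP.
by apply: (regular_fix (z := z)) regH _ _; rewrite ?groupM ?groupV // permM E permK.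
Qed.

Lemma regular_exists_at H w z : regular H -> exists2 h, h \in H & h w = z.
Proof.
case=> trH _; have : z \in orbit 'P H w by rewrite (atransP trH w (in_setT _)) inE.
by case/orbitP=> h Hh <-; exists h.
Qed.

Lemma regular_stab1 H : #|H| = #|[set: gT]| -> 'C_H[1 | 'P] = 1 -> regular H.
Proof.
move=> cardH stab1.
have trH : [transitive H, on [set: gT] | 'P].
  apply/imsetP; exists 1; rewrite ?inE //; apply/eqP.
  by rewrite eq_sym eqEcard subsetT card_orbit stab1 indexg1 cardH /=.
split=> // z; apply/eqP; rewrite trivg_card1.
have idx : #|H : 'C_H[z | 'P]| = #|H|.
  by rewrite -card_orbit (atransP trH z (in_setT _)) cardH.
have := Lagrange (subsetIl H 'C[z | 'P]); rewrite idx -{2}(mul1n #|H|).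
by move/eqP; rewrite eqn_pmul2r ?cardG_gt0.
Qed.

End Regular.

End HolAlgebra.

Section CyclicTwicePrimeSquare.
Variables (p : nat) (gT : finGroupType) (g : gT).
Hypotheses (p_pr : prime p) (p_odd : odd p).
Hypotheses (defN : [set: gT] = <[g]>) (cardN : #|[set: gT]| = (2 * p ^ 2)%N).
Local Notation n := (2 * p ^ 2)%N.
Local Notation AutN := (Aut [set: gT]).
Local Notation chi := (inv_perm gT).
Implicit Types (x y z : gT) (phi psi : {perm gT}).

Lemma order_g : #[g] = n.
Proof. by rewrite orderE -defN cardN. Qed.

Lemma cyclicN : cyclic [set: gT].
Proof. by rewrite defN cycle_cyclic. Qed.

Lemma abelianN : abelian [set: gT].
Proof. by rewrite defN cycle_abelian. Qed.

Lemma n_gt2 : 2 < n.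
Proof. by have := prime_odd_gt2 p_pr p_odd; nia. Qed.

Lemma expg_eq1 z m : n %| m -> z ^+ m = 1.
Proof.
move=> dvd_nm; apply/eqP; rewrite -order_dvdn (dvdn_trans _ dvd_nm) //.
by rewrite -cardN order_dvdG ?inE.
Qed.

Lemma Aut_power phi : phi \in AutN -> exists k, forall z, phi z = z ^+ k.
Proof.
move=> Aphi; have /cycleP[k Ek] : phi g \in <[g]> by rewrite -defN inE.
exists k => z; have /cycleP[i ->] : z \in <[g]> by rewrite -defN inE.
by rewrite autTX // Ek -!expgM mulnC.
Qed.

Lemma Aut_power_eq1 phi k e : (forall z, phi z = z ^+ k) -> phi ^+ e = 1 ->
  k ^ e = 1 %[mod n].
Proof.
move=> phiE phi_e; apply/eqP; rewrite -order_g -eq_expg_mod_order.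
by rewrite -(perm_powerX phiE) phi_e perm1 expg1.
Qed.

Lemma invg_neq_g : g^-1 != g.
Proof.
rewrite eq_invg_mul -expg2 -order_dvdn order_g.
by apply/negP=> /dvdn_leq => /(_ isT); rewrite leqNgt n_gt2.
Qed.

Lemma chi_neq1 : chi != 1.
Proof. by apply: contraNneq invg_neq_g => /permP/(_ g); rewrite permE perm1 => ->. Qed.

Lemma commAut phi psi : phi \in AutN -> psi \in AutN -> commute phi psi.
Proof. by move=> Aphi Apsi; apply: (centsP (Aut_cyclic_abelian cyclicN)). Qed.

Lemma card_AutN : #|AutN| = (p.-1 * p)%N.
Proof.
rewrite card_Aut_cyclic ?cyclicN // cardN.
rewrite totient_coprime ?coprimeXr ?coprime2p // totient_pfactor //.
by rewrite (@totient_pfactor 2 1) // mul1n expn1.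
Qed.

Lemma Aut_involution eps : eps \in AutN -> eps ^+ 2 = 1 -> eps = 1 \/ eps = chi.
Proof.
move=> Aeps eps2; have [k epsE] := Aut_power Aeps.
have k2 := Aut_power_eq1 epsE eps2.
have k_gt0 : 0 < k.
  by case: k {epsE} k2 => //; rewrite modn_small ?modn_small //; have := n_gt2; lia.
have dvd_k2 : n %| k ^ 2 - 1 by rewrite -eqn_mod_dvd ?k2 // expn_gt0 k_gt0.
case: (dvdn_sqrn_sub1 p_pr p_odd dvd_k2) => [dvd_k | dvd_k]; [left | right].
  by apply/permP => z; rewrite epsE perm1 -{1}(subnK k_gt0) expgD expg_eq1 ?mul1g.
apply/permP => z; rewrite epsE permE; apply/eqP; rewrite eq_sym eq_invg_mul.
by rewrite -expgS expg_eq1.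
Qed.

Lemma Aut_expn_decomp phi : phi \in AutN -> phi ^+ n = 1 ->
  exists psi, [/\ psi \in AutN, psi ^+ p = 1 & phi = psi \/ phi = psi * chi].
Proof.
move=> Aphi phi_n.
(* #[phi] divides both #|Aut N| = (p - 1) p and n = 2 p^2, hence 2 p. *)
have phi_2p : phi ^+ (2 * p)%N = 1.
  have o_n : #[phi] %| n by rewrite order_dvdn phi_n.
  have o_Aut : #[phi] %| p.-1 * p by rewrite -card_AutN order_dvdG.
  apply/eqP; rewrite -order_dvdn -double_sqr_sub_pred.
  by apply: dvdn_sub => //; apply: dvdn_mull.
have Aeps : phi ^+ p \in AutN by rewrite groupX.
have eps2 : (phi ^+ p) ^+ 2 = 1 by rewrite -expgM mulnC.
exists (phi * phi ^+ p); split; first by rewrite groupM.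
  rewrite expgMn; last exact: commAut.
  by rewrite (expg_odd p_odd eps2) -expg2.
have [eps1 | eps_chi] := Aut_involution Aeps eps2; [left | right].
  by rewrite eps1 mulg1.
by rewrite eps_chi -mulgA inv_perm_invol mulg1.
Qed.

Lemma Aut_expp1 psi : psi \in AutN -> psi ^+ p = 1 ->
  exists2 a, (2 * p %| a)%N & forall z, psi z = z * z ^+ a.
Proof.
move=> Apsi psi_p; have [k psiE] := Aut_power Apsi.
have k1 : (k = 1 %[mod 2 * p])%N.
  apply: expn_prime_eq1_mod => //.
  have dvd_2p_n : (2 * p %| n)%N by rewrite dvdn_mul // dvdn_exp.
  by rewrite -(modn_dvdm (k ^ p) dvd_2p_n) (Aut_power_eq1 psiE psi_p) modn_dvdm.
have k_gt0 : 0 < k.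
  by case: k {psiE} k1; rewrite // mod0n modn_small //; have := prime_gt1 p_pr; lia.
exists (k - 1); first by rewrite -eqn_mod_dvd // k1.
by move=> z; rewrite psiE -expgS subn1 prednK.
Qed.

Lemma Aut_expp1_shear psi x : psi \in AutN -> psi ^+ p = 1 ->
  exists y, [/\ psi x = x * y, psi y = y & y ^+ p = 1].
Proof.
move=> Apsi psi_p; have [a dvd_a psiE] := Aut_expp1 Apsi psi_p.
have n_dvd_ap : (n %| a * p)%N.
  by rewrite (_ : n = 2 * p * p)%N ?dvdn_mul // -mulnA mulnn.
have n_dvd_aa : (n %| a * a)%N.
  by apply: dvdn_trans (dvdn_mul dvd_a dvd_a); apply/dvdnP; exists 2; nia.
exists (x ^+ a); split; first exact: psiE.
  by rewrite psiE -expgM (expg_eq1 _ n_dvd_aa) mulg1.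
by rewrite -expgM expg_eq1.
Qed.

Lemma hol_expp x psi : psi \in AutN -> psi ^+ p = 1 ->
  hol_elt x psi ^+ p = hol_elt (x ^+ p) 1.
Proof.
move=> Apsi psi_p; have [y [psix psiy yp]] := Aut_expp1_shear x Apsi psi_p.
have /dvdnP[q Cp2] : (p %| 'C(p, 2))%N by rewrite prime_dvd_bin //= prime_odd_gt2.
rewrite hol_eltX // (hol_eltX1_shear p Apsi (commT abelianN x y) psix psiy) psi_p.
by rewrite Cp2 mulnC expgM yp expg1n mulg1.
Qed.

Lemma order_hol_cyc x psi : #[x] = n -> psi \in AutN -> psi ^+ p = 1 ->
  #[hol_elt x psi] = n.
Proof.
move=> ox Apsi psi_p.
have oxp : #[hol_elt x psi ^+ (p ^ 1)] = (2 * p)%N.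
  rewrite expn1 hol_expp // order_hol_trans orderXdiv ox; last first.
    by rewrite -mulnn mulnA dvdn_mull ?dvdnn.
  by rewrite -mulnn mulnA mulnK ?prime_gt0.
by rewrite (orderXpfactor oxp p_pr (dvdn_mull 2 (dvdnn p))) expn1 mulnCA mulnn.
Qed.

Lemma regular_cycle_hol x psi : #[x] = n -> psi \in AutN -> psi ^+ p = 1 ->
  regular <[hol_elt x psi]>.
Proof.
move=> ox Apsi psi_p; set h := hol_elt x psi.
have oh : #[h] = n := order_hol_cyc ox Apsi psi_p.
have trans_fix1 m : (p %| m)%N -> (h ^+ m) 1 = 1 -> h ^+ m = 1.
  case/dvdnP=> q ->; rewrite mulnC expgM hol_expp // hol_transX hol_elt1 ?group1 // => ->.
  exact: hol_elt11.
apply: regular_stab1; first by rewrite -orderE oh cardN.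
apply/trivgP/subsetP=> k; rewrite inE => /andP[/cycleP[m ->] /astab1P /= hm1]; rewrite inE.
have pm : (p %| m)%N.
  have : h ^+ (m * p) = 1.
    apply: trans_fix1; first exact: dvdn_mull.
    have : h ^+ m ^+ p \in 'C[1 | 'P] by rewrite groupX //; apply/astab1P.
    by rewrite expgM => /astab1P.
  move/eqP; rewrite -order_dvdn oh (_ : n = 2 * p * p)%N; last by rewrite -mulnA mulnn.
  by rewrite dvdn_pmul2r ?prime_gt0 //; apply: dvdn_trans; apply: dvdn_mull.
by rewrite (trans_fix1 m pm hm1).
Qed.

Lemma isog_cycle_hol x psi : #[x] = n -> psi \in AutN -> psi ^+ p = 1 ->
  <[hol_elt x psi]> \isog Zp n.
Proof. by move=> ox Apsi psi_p; rewrite isog_sym -(order_hol_cyc ox Apsi psi_p) Zp_isog. Qed.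

Lemma regular_hol_twist (H : {group {perm gT}}) x psi : regular H ->
  psi \in AutN -> psi ^+ p = 1 -> hol_elt x (psi * chi) \in H -> psi = 1.
Proof.
move=> regH Apsi psi_p Hh; have [y [psix psiy yp]] := Aut_expp1_shear x Apsi psi_p.
have Achi := inv_perm_Aut abelianN.
have psiX i : psi (x ^+ i) = x ^+ i * y ^+ i.
  by rewrite autTX // psix (expgMn _ (commT abelianN x y)).
have hh : hol_elt x (psi * chi) * hol_elt x (psi * chi) = hol_elt y^-1 (psi ^+ 2).
  rewrite hol_eltM ?groupM //; congr hol_elt.
    by rewrite permM permE psix invMg mulgA (commT abelianN x) mulgK.
  by rewrite -mulgA (mulgA chi) -(commAut Apsi Achi) -mulgA inv_perm_invol mulg1.
(* (x, psi chi)^2 = (y^-1, psi^2) fixes x^a with 2a - 1 = p, since y^p = 1. *)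
pose a := p./2.+1; have aa : (a + a = p.+1)%N.
  by rewrite /a -[in RHS](odd_double_half p) p_odd -addnn /=; lia.
have fix_xa : (hol_elt x (psi * chi) * hol_elt x (psi * chi)) (x ^+ a) = x ^+ a.
  rewrite hh hol_eltE expg2 permM psiX autTM // psiX autTX // psiy -mulgA -expgD aa.
  by rewrite expgSr yp mul1g (commT abelianN _ y) mulKg.
have /eqP := regular_fix regH (groupM Hh Hh) fix_xa.
by rewrite hh hol_elt_eq1 ?groupX // => /andP[_ /eqP psi2]; rewrite -(expg_odd p_odd psi2).
Qed.

Lemma generator_g : generator [set: gT] g.
Proof. by rewrite /generator defN. Qed.

Lemma generator_order x : generator [set: gT] x -> #[x] = n.
Proof. by move/eqP=> defNx; rewrite orderE -defNx cardN. Qed.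

(* The dihedral regular subgroup <(g^2, 1), (g, chi)> consists of the (x, 1) with x a
   square and the (x, chi) with x a non-square; squares have index 2 in N. *)
Definition dih_aut x : {perm gT} := if x \in <[g ^+ 2]> then 1 else chi.

Definition Dih : {set {perm gT}} := [set hol_elt x (dih_aut x) | x : gT].

Lemma mem_sq i : (g ^+ i \in <[g ^+ 2]>) = ~~ odd i.
Proof.
apply/cycleP/idP => [[m /eqP] | i_even].
  rewrite -expgM eq_expg_mod_order order_g => /eqP/(congr1 (modn^~ 2)).
  by rewrite !modn_dvdm ?dvdn_mulr // !modn2 oddM /=; case: (odd i).
by exists i./2; rewrite -expgM mul2n -{1}(odd_double_half i) (negbTE i_even).
Qed.

Lemma mem_sqM x y : (x * y \in <[g ^+ 2]>) = ((x \in <[g ^+ 2]>) == (y \in <[g ^+ 2]>)).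
Proof.
have /cycleP[i ->] : x \in <[g]> by rewrite -defN inE.
have /cycleP[j ->] : y \in <[g]> by rewrite -defN inE.
by rewrite -expgD !mem_sq oddD; case: (odd i); case: (odd j).
Qed.

Lemma dih_aut_Aut x : dih_aut x \in AutN.
Proof. by rewrite /dih_aut; case: ifP => _; rewrite ?group1 ?inv_perm_Aut ?abelianN. Qed.

Lemma mem_sq_dih_aut x y : (dih_aut y x \in <[g ^+ 2]>) = (x \in <[g ^+ 2]>).
Proof. by rewrite /dih_aut; case: ifP => _; rewrite ?perm1 // permE groupV. Qed.

Lemma dih_autM x y : dih_aut x * dih_aut y = dih_aut (y * dih_aut y x).
Proof.
rewrite {3}/dih_aut mem_sqM mem_sq_dih_aut /dih_aut.
by case: (x \in _); case: (y \in _); rewrite /= ?mulg1 ?mul1g ?inv_perm_invol.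
Qed.

Lemma group_set_Dih : group_set Dih.
Proof.
apply/group_setP; split.
  by apply/imsetP; exists 1; rewrite //= /dih_aut group1 hol_elt11.
move=> _ _ /imsetP[x _ ->] /imsetP[y _ ->].
by rewrite hol_eltM ?dih_aut_Aut // dih_autM; apply/imsetP; exists (y * dih_aut y x).
Qed.

Canonical Dih_group := Group group_set_Dih.

Lemma card_Dih : #|Dih| = n.
Proof.
rewrite card_imset -?cardsT ?cardN // => x1 x2 E.
by rewrite -(hol_elt1 x1 (dih_aut_Aut x1)) E hol_elt1 ?dih_aut_Aut.
Qed.

Lemma regular_Dih : regular Dih.
Proof.
apply: (@regular_stab1 _ Dih_group); first by rewrite card_Dih cardN.
apply/trivgP/subsetP => k; rewrite inE => /andP[/imsetP[x _ ->] /astab1P /=].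
rewrite apermE hol_elt1 ?dih_aut_Aut // => ->.
by rewrite /dih_aut group1 hol_elt11 inE.
Qed.

Lemma order_sq (a : gT) : #[a] = n -> #[a ^+ 2] = (p ^ 2)%N.
Proof. by move=> oa; rewrite orderXdiv oa ?mulKn // dvdn_mulr. Qed.

Lemma Dih_min (K : {group {perm gT}}) a b : K \subset Dih -> #[a] = n ->
  hol_elt (a ^+ 2) 1 \in K -> hol_elt b chi \in K -> K :=: Dih.
Proof.
move=> sKDih oa Kt Ku; set t := hol_elt (a ^+ 2) 1.
have ot : #[t] = (p ^ 2)%N by rewrite order_hol_trans order_sq.
have /dvdnP[c cardK] : (p ^ 2 %| #|K|)%N by rewrite -ot order_dvdG.
have : (c %| 2)%N.
  by rewrite -(@dvdn_pmul2r (p ^ 2)) ?expn_gt0 ?prime_gt0 // -cardK -card_Dih cardSg.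
case: c cardK => [|[|[|c]]] cardK c2 //.
  (* |K| = p^2 would force K = <t>, a group of translations *)
  have defK : K :=: <[t]>.
    by apply/eqP; rewrite eq_sym eqEcard cycle_subG Kt -orderE ot cardK mul1n /=.
  move: Ku; rewrite defK => /cycleP[m]; rewrite hol_transX.
  by case/(hol_elt_inj (inv_perm_Aut abelianN) (group1 _))=> _ /eqP; rewrite (negbTE chi_neq1).
by apply/eqP; rewrite eqEcard sKDih card_Dih cardK leqnn.
Qed.

Lemma generator_not_sq a : #[a] = n -> a \notin <[g ^+ 2]>.
Proof.
move=> oa; apply/negP=> /cycleP[m am].
suff : (n %| 1 * p ^ 2)%N by rewrite dvdn_pmul2r ?expn_gt0 ?prime_gt0.
rewrite mul1n -oa am; apply: dvdn_trans (orderXdvd _ m) _.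
by rewrite (order_sq order_g).
Qed.

Lemma hol_sq_Dih x : hol_elt (x ^+ 2) 1 \in Dih.
Proof.
apply/imsetP; exists (x ^+ 2) => //.
have /cycleP[i ->] : x \in <[g]> by rewrite -defN inE.
by rewrite /dih_aut -expgM mem_sq oddM andbF.
Qed.

Lemma hol_inv_Dih x : x \notin <[g ^+ 2]> -> hol_elt x chi \in Dih.
Proof. by move=> x_nsq; apply/imsetP; exists x; rewrite // /dih_aut (negbTE x_nsq). Qed.

Lemma Dih_gen a : #[a] = n -> <<[set hol_elt (a ^+ 2) 1; hol_elt a chi]>> = Dih.
Proof.
move=> oa; apply: (Dih_min (b := a) _ oa); rewrite ?mem_gen ?inE ?eqxx ?orbT //.
by rewrite gen_subG subUset !sub1set hol_sq_Dih hol_inv_Dih ?generator_not_sq.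
Qed.

Lemma isog_Dih : Dih \isog 'D_n.
Proof.
have Achi := inv_perm_Aut abelianN.
have g_neq1 : g != 1 by rewrite -order_eq1 order_g; have := n_gt2; lia.
have ginv_neq1 : g^-1 != 1 by rewrite eq_invg1.
set u1 := hol_elt g chi; set u2 := hol_elt g^-1 chi.
have u1_neq_u2 : u1 != u2.
  by apply: contraNneq invg_neq_g; case/(hol_elt_inj Achi Achi) => /esym ->.
have defD : <<[set u1; u2]>> = Dih.
  have Ku1 : u1 \in <<[set u1; u2]>> by rewrite mem_gen // !inE eqxx.
  have Ku2 : u2 \in <<[set u1; u2]>> by rewrite mem_gen // !inE eqxx orbT.
  apply: (Dih_min _ order_g _ Ku1).
    by rewrite gen_subG subUset !sub1set !hol_inv_Dih ?generator_not_sq ?orderV ?order_g.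
  by rewrite (_ : hol_elt _ 1 = u2 * u1) ?groupM // hol_eltM // inv_perm_invol permE invgK.
move: (involutions_gen_dihedral (order_hol_inv abelianN g_neq1)
  (order_hol_inv abelianN ginv_neq1) u1_neq_u2).
by rewrite /= defD card_Dih.
Qed.

Section Classification.
Variable H : {group {perm gT}}.
Hypotheses (sHHol : H \subset Hol gT) (regH : regular H).

Lemma regular_Hol_elt h : h \in H -> exists psi, [/\ psi \in AutN, psi ^+ p = 1 &
  h = hol_elt (h 1) psi \/ h = hol_elt (h 1) (psi * chi)].
Proof.
move=> Hh; have [phi Aphi hE] := HolP (subsetP sHHol h Hh).
have phi_n : phi ^+ n = 1.
  by rewrite -cardN -(card_regular regH) (hol_elt_expg_card (x := h 1) Aphi) -?hE.
have [psi [Apsi psi_p phiE]] := Aut_expn_decomp Aphi phi_n.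
by exists psi; split=> //; case: phiE => <-; [left | right].
Qed.

Lemma regular_Hol_Dih : hol_elt g chi \in H -> H :=: Dih.
Proof.
move=> Hu; have Achi := inv_perm_Aut abelianN.
have [h Hh hg2] := regular_exists_at 1 (g ^+ 2) regH.
have [psi [Apsi psi_p hE]] := regular_Hol_elt Hh; rewrite hg2 in hE.
have Ht : hol_elt (g ^+ 2) 1 \in H.
  case: hE => hE; rewrite hE in Hh.
    have := groupM Hu Hh; rewrite hol_eltM // (commAut Achi Apsi).
    by move/(regular_hol_twist regH Apsi psi_p) => psi1; rewrite -psi1.
  (* otherwise (g^2, chi) would fix g *)
  have psi1 := regular_hol_twist regH Apsi psi_p Hh; rewrite psi1 mul1g in Hh.
  have fix_g : hol_elt (g ^+ 2) chi g = g by rewrite hol_eltE permE expg2 mulgK.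
  by move/eqP: (regular_fix regH Hh fix_g); rewrite hol_elt_eq1 // (negbTE chi_neq1) andbF.
have sDH : Dih \subset H by rewrite -(Dih_gen order_g) gen_subG subUset !sub1set Ht Hu.
by apply/eqP; rewrite eq_sym eqEcard sDH card_Dih (card_regular regH) cardN /=.
Qed.

Lemma regular_Hol_classify : H \in cyc_regs gT p \/ H \in dih_regs gT.
Proof.
have [h Hh hg] := regular_exists_at 1 g regH.
have [psi [Apsi psi_p hE]] := regular_Hol_elt Hh; rewrite hg in hE.
case: hE => hE; rewrite hE in Hh; [left | right].
  have defH : H :=: <[hol_elt g psi]>.
    apply/eqP; rewrite eq_sym eqEcard cycle_subG Hh -orderE.
    by rewrite (order_hol_cyc order_g Apsi psi_p) (card_regular regH) cardN /=.
  rewrite inE; apply/existsP; exists g; apply/existsP; exists psi.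
  by rewrite generator_g Apsi psi_p defH !eqxx.
have psi1 := regular_hol_twist regH Apsi psi_p Hh; rewrite psi1 mul1g in Hh.
rewrite inE; apply/existsP; exists g.
by rewrite generator_g (Dih_gen order_g) (regular_Hol_Dih Hh) eqxx.
Qed.

End Classification.

Lemma regular_of_mem_regs (H : {group {perm gT}}) :
  H \in cyc_regs gT p \/ H \in dih_regs gT -> regular H.
Proof.
case; rewrite inE.
  case/existsP=> x /existsP[phi /and4P[gen_x Aphi /eqP phi_p /eqP ->]].
  exact: regular_cycle_hol (generator_order gen_x) Aphi phi_p.
by case/existsP=> a /andP[/generator_order oa /eqP ->]; rewrite Dih_gen //; apply: regular_Dih.
Qed.

Definition Aut_expp := [set psi in AutN | psi ^+ p == 1].

Lemma card_Aut_expp : #|Aut_expp| = p.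
Proof.
have [phi0 Aphi0 o_phi0] : {phi0 | phi0 \in AutN & #[phi0] = p}.
  by apply: Cauchy; rewrite // card_AutN dvdn_mull.
suff -> : Aut_expp = <[phi0]> by rewrite -orderE o_phi0.
have pm1_gt0 : 0 < p.-1 by rewrite -subn1 subn_gt0 prime_gt1.
have p_ndvd_pm1 : ~~ (p %| p.-1).
  by apply/negP=> /(dvdn_leq pm1_gt0); rewrite leqNgt ltn_predL prime_gt0.
have hallP : p.-Hall(AutN) <[phi0]>.
  rewrite pHallE cycle_subG Aphi0 -orderE o_phi0 card_AutN (partnM _ pm1_gt0 (prime_gt0 p_pr)).
  have p'_pm1 : p^'.-nat p.-1 by rewrite p'natE.
  by rewrite (part_p'nat p'_pm1) (part_pnat_id (pnat_id p_pr)) mul1n eqxx.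
have nP : <[phi0]> <| AutN.
  by rewrite -sub_abelian_normal ?cycle_subG ?Aut_cyclic_abelian ?cyclicN.
apply/setP=> psi; rewrite inE; apply/andP/idP => [[Apsi /eqP psi_p] | /cycleP[i ->]].
  rewrite (mem_normal_Hall hallP nP Apsi); apply: pnat_dvd (pnat_id p_pr).
  by rewrite order_dvdn psi_p.
by rewrite groupX // expgAC -o_phi0 expg_order expg1n.
Qed.

Lemma cyc_regs_image : cyc_regs gT p = [set <[hol_elt g psi]>%G | psi in Aut_expp].
Proof.
apply/setP=> H; apply/idP/imsetP => [|[psi]].
  rewrite inE => /existsP[x /existsP[phi /and4P[/generator_order ox Aphi]]].
  move=> /eqP phi_p /eqP defH.
  have [k /cycleP[m ->] hm1] := regular_exists_at 1 g (regular_cycle_hol ox Aphi phi_p).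
  have Aphim : phi ^+ m \in AutN by rewrite groupX.
  have phim_p : (phi ^+ m) ^+ p = 1 by rewrite expgAC phi_p expg1n.
  have hmE : hol_elt x phi ^+ m = hol_elt g (phi ^+ m) by rewrite hol_eltX // hm1.
  exists (phi ^+ m); first by rewrite inE Aphim phim_p eqxx.
  apply: val_inj; rewrite /= defH -hmE; apply/eqP.
  rewrite eq_sym eqEcard cycle_subG mem_cycle /= -!orderE hmE.
  by rewrite (order_hol_cyc ox) // (order_hol_cyc order_g).
rewrite inE => /andP[Apsi /eqP psi_p] ->; rewrite inE.
by apply/existsP; exists g; apply/existsP; exists psi; rewrite generator_g Apsi psi_p !eqxx.
Qed.

Lemma card_cyc_regs : #|cyc_regs gT p| = p.
Proof.
rewrite cyc_regs_image card_in_imset ?card_Aut_expp // => psi1 psi2.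
move=> /setIdP[A1 /eqP p1] /setIdP[A2 /eqP p2] /(congr1 val) /= E12.
have h2in : hol_elt g psi2 \in <[hol_elt g psi1]> by rewrite E12 cycle_id.
have := regular_eq_at (z := 1) (regular_cycle_hol order_g A1 p1) (cycle_id _) h2in.
by rewrite !hol_elt1 // => /(_ erefl)/(hol_elt_inj A1 A2)[].
Qed.

Lemma dih_regs_Dih : dih_regs gT = [set Dih_group].
Proof.
apply/setP=> H; rewrite in_set1; apply/idP/eqP => [|->]; rewrite inE.
  case/existsP=> a /andP[/generator_order oa /eqP defH].
  by apply: val_inj; rewrite /= defH Dih_gen.
by apply/existsP; exists g; rewrite generator_g (Dih_gen order_g) eqxx.
Qed.

End CyclicTwicePrimeSquare.

Theorem proposition11 (p : nat) (gT : finGroupType) :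
  prime p -> odd p ->
  cyclic [set: gT] -> #|[set: gT]| = (2 * p ^ 2)%N ->
  (forall H : {group {perm gT}}, H \subset Hol gT -> (regular H <->
      (H \in cyc_regs gT p) \/ (H \in dih_regs gT)))
  /\ #|cyc_regs gT p| = p
  /\ (forall H : {group {perm gT}}, H \in cyc_regs gT p -> H \isog Zp (2 * p ^ 2))
  /\ #|dih_regs gT| = 1%N
  /\ (forall H : {group {perm gT}}, H \in dih_regs gT -> H \isog 'D_(2 * p ^ 2)).
Proof.
move=> p_pr p_odd /cyclicP[g defN] cardN.
have defD := dih_regs_Dih p_pr p_odd defN cardN.
split; [|split; [|split; [|split]]].
- move=> H sHHol; split; first exact: regular_Hol_classify p_pr p_odd defN cardN H sHHol.
  exact: regular_of_mem_regs p_pr p_odd defN cardN H.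
- exact: card_cyc_regs p_pr p_odd defN cardN.
- move=> H; rewrite (cyc_regs_image p_pr p_odd defN cardN).
  case/imsetP=> psi /setIdP[Apsi /eqP psi_p] ->.
  exact: isog_cycle_hol p_pr p_odd defN cardN _ _ (order_g defN cardN) Apsi psi_p.
- by rewrite defD cards1.
- by move=> H; rewrite defD inE => /eqP ->; apply: isog_Dih p_pr p_odd defN cardN.
Qed.
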